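(* Let $A\in\mathbb{R}^{n\times n}$, $A\ge0$ entrywise, be the weighted adjacency matrix of a directed stem-bud network with $\rho(A)<1$. If the weights of any of its stem edges are increased by nonnegative amounts (i.e., $A$ is replaced by $A+\sum_{q\in S}w_qe_{q+1}e_q^{\top}$ with $w_q\ge0$ and $S$ a set of stem edges), then the resulting matrix still has spectral radius less than $1$.
   Context: A directed stem-bud network on $n$ nodes has a junction $y\in\{1,\dots,n-1\}$ and weighted adjacency matrix $A=(a_{pq})$ whose only possibly nonzero entries are $a_{q+1,q}$ ($q=1,\dots,n-1$) and $a_{yn}$; $a_{pq}$ is the weight of edge $q\to p$. The stem consists of the edges $q\to q+1$ for $q=1,\dots,y-1$; the bud is the cycle $y\to\cdots\to n\to y$. For a directed line network ($a_{yn}=0$) all edges belong to the stem. $\rho$ is the spectral radius. *)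

From HB Require Import structures.
From mathcomp Require Import all_boot all_order all_algebra.
From mathcomp Require Import complex.
From mathcomp Require Import boolp classical_sets reals.
Set Implicit Arguments. Unset Strict Implicit. Unset Printing Implicit Defensive.
Import Order.TTheory GRing.Theory Num.Theory.
Local Open Scope ring_scope.
Local Open Scope classical_set_scope.

Section StemBud.
Variables (R : realType) (n : nat).

Definition complexify (A : 'M[R]_n) : 'M[R[i]]_n :=
  map_mx (fun x : R => (x%:C)%C) A.

Definition spectrum (A : 'M[R]_n) : set R[i] :=
  [set l | eigenvalue (complexify A) l].

Definition spectral_radius (A : 'M[R]_n) : R :=
  sup [set ComplexField.Normc.normc l | l in spectrum A].

(* Nodes 1..n are indexed 0..n-1; the junction y is given 0-based (y0 = y-1),
   so y0.+1 < n.  Edge q -> q+1 has weight A (q+1) q; edge n -> y has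
   weight A y0 (n-1). *)
Definition stem_bud (A : 'M[R]_n) (y0 : 'I_n) : Prop :=
  (y0.+1 < n)%N /\
  forall i j : 'I_n, A i j <> 0 ->
    (i : nat) = j.+1 \/ (i = y0 /\ (j : nat) = n.-1).

Definition bud_closed (A : 'M[R]_n) (y0 : 'I_n) : Prop :=
  exists j : 'I_n, (j : nat) = n.-1 /\ A y0 j <> 0.

(* Edge q -> q+1 (0-based source q) is a stem edge: q < y0 (i.e. q+1 < y in
   1-based numbering), or the network is a directed line (a_{yn} = 0), in which
   case all edges are stem edges. *)
Definition stem_edge (A : 'M[R]_n) (y0 : 'I_n) (q : 'I_n) : Prop :=
  (q.+1 < n)%N /\ ((q < y0)%N \/ ~ bud_closed A y0).

Definition edge_mx (q : 'I_n) : 'M[R]_n :=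
  \matrix_(i, j) ((((i : nat) == q.+1) && (j == q))%:R).

End StemBud.

(** The stem nodes (all nodes, for a directed line) come first and lie on no
    cycle: their rows of [A] are lower triangular, and the added weights sit
    strictly below the diagonal in stem columns.  A permutation contributing to
    the determinant of ['X - A] must therefore fix every stem node, so it never
    uses a modified entry.  Hence the characteristic polynomial, and with it the
    spectrum, is unchanged, whatever the signs of the weights. *)

From HB Require Import structures.
From mathcomp Require Import all_boot all_order all_algebra.
From mathcomp Require Import complex.
From mathcomp Require Import boolp classical_sets reals.
From mathcomp Require Import perm.
Set Implicit Arguments.
Unset Strict Implicit.
Unset Printing Implicit Defensive.

Import Order.TTheory GRing.Theory Num.Theory.
Local Open Scope ring_scope.

Lemma perm_id_of_le n (s : 'S_n) m :
  (forall i : 'I_n, (i < m)%N -> (s i <= i)%N) ->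
  forall i : 'I_n, (i < m)%N -> s i = i.
Proof.
move=> s_le i; have [k lt_ik] := ubnP i.
elim: k i lt_ik => // k IHk i; rewrite ltnS => le_ik lt_im.
have [/eqP/val_inj // | lt_si] := boolP (s i == i :> nat).
have {}lt_si : (s i < i)%N by rewrite ltn_neqAle lt_si s_le.
have /perm_inj fix_si : s (s i) = s i.
  by apply: IHk; [apply: leq_trans le_ik | apply: ltn_trans lt_im].
by rewrite fix_si ltnn in lt_si.
Qed.

Lemma det_eq_lower_rows (F : comPzRingType) n (M N : 'M[F]_n) m :
  (forall i j : 'I_n, (i < m)%N -> (i < j)%N -> M i j = 0) ->
  (forall i j : 'I_n, (i <= j)%N || (m <= j)%N -> M i j = N i j) ->
  \det M = \det N.
Proof.
move=> M_lower eqMN; apply: eq_bigr => s _; congr (_ * _).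
have [/forallP s_le | ] := boolP [forall i : 'I_n, (i < m)%N ==> (s i <= i)%N];
    last first.
  case/forallPn => i; rewrite negb_imply -ltnNge => /andP[lt_im lt_isi].
  have Ms0 : M i (s i) = 0 by apply: M_lower.
  have Ns0 : N i (s i) = 0 by rewrite -eqMN ?(ltnW lt_isi).
  by rewrite (bigD1 i) //= Ms0 mul0r (bigD1 i) //= Ns0 mul0r.
have s_id := perm_id_of_le (fun i => implyP (s_le i)).
apply: eq_bigr => i _; apply: eqMN.
have [lt_sim | _] := ltnP (s i) m; last by rewrite orbT.
by rewrite (perm_inj (s_id _ lt_sim)) leqnn.
Qed.

Lemma char_poly_eq_lower_rows (F : comNzRingType) n (M N : 'M[F]_n) m :
  (forall i j : 'I_n, (i < m)%N -> (i < j)%N -> M i j = 0) ->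
  (forall i j : 'I_n, (i <= j)%N || (m <= j)%N -> M i j = N i j) ->
  char_poly M = char_poly N.
Proof.
move=> M_lower eqMN; apply: det_eq_lower_rows (m) _ _ => i j.
  move=> lt_im lt_ij.
  by rewrite !mxE M_lower // -val_eqE (ltn_eqF lt_ij) mulr0n subr0.
by move=> ij_out; rewrite !mxE eqMN.
Qed.

Lemma spectrum_eq (R : realType) n (A B : 'M[R]_n) :
  char_poly (complexify A) = char_poly (complexify B) ->
  spectrum A = spectrum B.
Proof.
move=> eq_char; rewrite /spectrum.
by apply/seteqP; split=> l /=; rewrite !eigenvalue_root_char eq_char.
Qed.

Lemma edge_mx_sum_eq0 (R : realType) n (S : {set 'I_n}) (w : 'I_n -> R)
    (i j : 'I_n) :
  (i <= j)%N || (j \notin S) -> (\sum_(q in S) w q *: edge_mx R q) i j = 0.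
Proof.
move=> ij_out; rewrite summxE big1 // => q qS; rewrite !mxE.
have [/andP[/eqP iq /eqP jq] | _] := boolP (_ && _); last by rewrite mulr0.
by move: ij_out; rewrite iq jq ltnn qS.
Qed.

Section StemBudNetwork.
Variables (R : realType) (n : nat) (A : 'M[R]_n) (y0 : 'I_n).

(* The nodes [0 .. stem_size - 1] lie on no cycle. *)
Definition stem_size : nat := if `[< bud_closed A y0 >] then (y0 : nat) else n.

Lemma stem_edge_lt_size q : stem_edge A y0 q -> (q < stem_size)%N.
Proof.
rewrite /stem_size => -[_ q_stem]; case: asboolP => [bud | _]; last exact: ltn_ord.
by case: q_stem.
Qed.

Lemma stem_bud_rows_lower (i j : 'I_n) :
  stem_bud A y0 -> (i < stem_size)%N -> (i <= j)%N -> A i j = 0.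
Proof.
move=> [_ A_supp] lt_i le_ij; apply: contrapT => Aij.
have [ij_edge | [iy0 jlast]] := A_supp _ _ Aij; first by rewrite ij_edge ltnn in le_ij.
move: lt_i; rewrite /stem_size -iy0; case: asboolP => [_ | open]; first by rewrite ltnn.
by case: open; exists j.
Qed.

End StemBudNetwork.

Theorem corollary5p5 (R : realType) (n : nat) (A : 'M[R]_n) (y0 : 'I_n)
  (S : {set 'I_n}) (w : 'I_n -> R) :
  (forall i j, 0 <= A i j) ->
  stem_bud A y0 ->
  spectral_radius A < 1 ->
  (forall q, q \in S -> stem_edge A y0 q) ->
  (forall q, q \in S -> 0 <= w q) ->
  spectral_radius (A + \sum_(q in S) w q *: edge_mx R q) < 1.
Proof.
move=> _ sbA rhoA_lt1 stemS _.
suff /spectrum_eq same_spectrum :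
    char_poly (complexify (A + \sum_(q in S) w q *: edge_mx R q)) = char_poly (complexify A).
  by rewrite /spectral_radius same_spectrum.
apply: (char_poly_eq_lower_rows (m := stem_size A y0)) => i j; rewrite !mxE.
  move=> lt_im /ltnW le_ij.
  by rewrite edge_mx_sum_eq0 ?le_ij // (stem_bud_rows_lower sbA lt_im le_ij) addr0.
case/orP=> [le_ij | le_mj]; rewrite edge_mx_sum_eq0 ?addr0 ?le_ij //.
apply/orP; right; apply: contraTN le_mj => jS.
by rewrite -ltnNge (stem_edge_lt_size (stemS _ jS)).
Qed.
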